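(* Let $p\in(1,\infty)$ and let $G=(X,b,m,0)$ be a locally finite, $p$-hyperbolic model graph with respect to $x_0\in X$ (with potential $c=0$). Suppose that the curvature ratio $\kappa(r)=k_+(r)/k_-(r)>0$ is constant, equal to some $\kappa>1$, for all $r>r_0$, for some $r_0\in\mathbb{N}_0$. Then the Green's function $g$ with pole $x_0$ is radial and $$g(r)=\frac{1}{(\kappa^{1/(p-1)}-1)\,\partial B(r-1)^{1/(p-1)}},\qquad r>r_0,$$ where $g(r)$ denotes the value of $g$ on $S_r$.
   Context: Weighted graph $G=(X,b,m,c)$: $X$ countably infinite; $b$ symmetric, nonnegative, zero on the diagonal, $\sum_yb(x,y)<\infty$; $m>0$; $c\ge0$; $x\sim y$ iff $b(x,y)>0$; $X$ connected; locally finite: each vertex has finitely many neighbours. $\mathcal{E}_p(f)=\frac12\sum_{x,y}b(x,y)|f(x)-f(y)|^p+\sum_xc(x)|f(x)|^p$; $p$-hyperbolic means $\inf\{\mathcal{E}_p(\varphi):\varphi\text{ finitely supported},\varphi\ge1\text{ on }K\}>0$ for some finite $K$. $d$ is the combinatorial graph distance, $S_r=\{x:d(x_0,x)=r\}$, $\partial B(r)=\sum_{x\in S_r,y\in S_{r+1}}b(x,y)$. $k_\pm(x)=\frac1{m(x)}\sum_{y\sim x,\,d(x_0,y)=d(x_0,x)\pm1}b(x,y)$; $G$ is a model graph with respect to $x_0$ if $k_\pm$ and $c/m$ are constant on each sphere $S_r$, and $k_\pm(r)$ denotes this value. $a^{\langle p-1\rangle}=|a|^{p-2}a$, $\Delta_pf(x)=\frac1{m(x)}\sum_yb(x,y)(f(x)-f(y))^{\langle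 p-1\rangle}$. The Green's function with pole $x_0$ is the minimal positive solution $g$ of $\Delta_pg=\frac1m\mathds{1}_{x_0}$ on $X$. *)

From Stdlib Require Import Reals Lra List ClassicalEpsilon.
From Coquelicot Require Import Coquelicot.
Open Scope R_scope.

(* The countably infinite vertex set X is identified with nat.
   A graph is given by b : nat -> nat -> R (edge weights), m (vertex measure),
   c (potential). *)

(* a^q for a >= 0 and real q > 0, with the convention 0^q = 0. *)
Definition rpow (a q : R) : R := if Req_EM_T a 0 then 0 else Rpower a q.

Definition absp (a q : R) : R := rpow (Rabs a) q.

(* a^<q> := |a|^(q-1) a = sgn(a) |a|^q ; used as a^<p-1> *)
Definition sgnpow (a q : R) : R :=
  if Rle_dec 0 a then rpow a q else - rpow (- a) q.

Inductive walk (b : nat -> nat -> R) : nat -> nat -> nat -> Prop :=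
| walk_nil : forall x, walk b x x 0
| walk_cons : forall x y z n, 0 < b x y -> walk b y z n -> walk b x z (S n).

Definition is_dist (b : nat -> nat -> R) (x y : nat) (n : nat) : Prop :=
  walk b x y n /\ forall k, (k < n)%nat -> ~ walk b x y k.

Definition gdist (b : nat -> nat -> R) (x y : nat) : nat :=
  epsilon (inhabits 0%nat) (fun n => is_dist b x y n).

Definition connected (b : nat -> nat -> R) : Prop :=
  forall x y, exists n, walk b x y n.

Definition locally_finite (b : nat -> nat -> R) : Prop :=
  forall x, exists l : list nat, forall y, 0 < b x y -> In y l.

Definition weighted_graph (b : nat -> nat -> R) (m c : nat -> R) : Prop :=
  (forall x y, b x y = b y x) /\
  (forall x y, 0 <= b x y) /\
  (forall x, b x x = 0) /\
  (forall x, ex_series (fun y => b x y)) /\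
  (forall x, 0 < m x) /\
  (forall x, 0 <= c x) /\
  connected b /\ locally_finite b.

(* All sums below are over neighbourhoods / finitely many nonzero terms
   (local finiteness, finite support), so Coquelicot's Series is the
   genuine (finite) sum. *)

Definition energy (p : R) (b : nat -> nat -> R) (c : nat -> R) (phi : nat -> R) : R :=
  / 2 * Series (fun x => Series (fun y => b x y * absp (phi x - phi y) p))
  + Series (fun x => c x * absp (phi x) p).

Definition finitely_supported (phi : nat -> R) : Prop :=
  exists N, forall x, (N <= x)%nat -> phi x = 0.

Definition p_hyperbolic (p : R) (b : nat -> nat -> R) (c : nat -> R) : Prop :=
  exists K : list nat, exists eps, 0 < eps /\
    forall phi, finitely_supported phi -> (forall x, In x K -> 1 <= phi x) ->
      eps <= energy p b c phi.

Definition kplus (b : nat -> nat -> R) (m : nat -> R) (x0 x : nat) : R :=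
  / m x * Series (fun y =>
    if Nat.eq_dec (gdist b x0 y) (S (gdist b x0 x)) then b x y else 0).

Definition kminus (b : nat -> nat -> R) (m : nat -> R) (x0 x : nat) : R :=
  / m x * Series (fun y =>
    if Nat.eq_dec (S (gdist b x0 y)) (gdist b x0 x) then b x y else 0).

Definition model_graph (b : nat -> nat -> R) (m c : nat -> R) (x0 : nat) : Prop :=
  forall x y, gdist b x0 x = gdist b x0 y ->
    kplus b m x0 x = kplus b m x0 y /\ kminus b m x0 x = kminus b m x0 y /\
    c x / m x = c y / m y.

Definition dB (b : nat -> nat -> R) (x0 r : nat) : R :=
  Series (fun x => if Nat.eq_dec (gdist b x0 x) r then
    Series (fun y => if Nat.eq_dec (gdist b x0 y) (S r) then b x y else 0)
  else 0).

Definition plap (p : R) (b : nat -> nat -> R) (m : nat -> R) (f : nat -> R) (x : nat) : R :=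
  / m x * Series (fun y => b x y * sgnpow (f x - f y) (p - 1)).

Definition green_eq (p : R) (b : nat -> nat -> R) (m : nat -> R) (x0 : nat) (h : nat -> R) : Prop :=
  forall x, plap p b m h x = (if Nat.eqb x x0 then / m x else 0).

Definition is_green (p : R) (b : nat -> nat -> R) (m : nat -> R) (x0 : nat) (g : nat -> R) : Prop :=
  (forall x, 0 < g x) /\ green_eq p b m x0 g /\
  (forall h, (forall x, 0 < h x) -> green_eq p b m x0 h -> forall x, g x <= h x).

(* On a model graph the equation Delta_p u = 1_{x0} / m for a radial function u = h(d(x0, .))
   reduces to a flux condition on each sphere: (h(r) - h(r+1))^{p-1} dB(r) = 1, because k_+ m and
   k_- m sum to the boundary measures dB(r) and dB(r-1) over S_r.  Hence
   h(r) = sum_{k >= r} dB(k)^{-1/(p-1)} is a positive solution tending to 0 at infinity.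
   Minimality of g gives g <= h.  Conversely h - g cannot have a positive maximum: at a maximum the
   p-Laplacians agree, so strict monotonicity of t |-> t^<p-1> makes h - g constant on the
   neighbours, hence on the whole connected graph, which contradicts h -> 0 and g > 0.  Beyond r0,
   k_+/k_- = dB(r+1)/dB(r) = kappa, so the tail of the series is geometric with ratio
   kappa^{-1/(p-1)}; summing it gives the formula. *)

From Stdlib Require Import Reals Lra Lia List Arith Classical ClassicalEpsilon Wf_nat.
From Coquelicot Require Import Coquelicot.
Open Scope R_scope.

Lemma sum_n_zero (a : nat -> R) N : (forall n, (n <= N)%nat -> a n = 0) -> sum_n a N = 0.
Proof.
  intros Ha. rewrite (sum_n_ext_loc _ (fun _ => 0) N Ha), sum_n_const. apply Rmult_0_r.
Qed.

Lemma is_series_finite_support (a : nat -> R) N :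
  (forall n, (N < n)%nat -> a n = 0) -> is_series a (sum_n a N).
Proof.
  intros Ha. apply filterlim_ext_loc with (fun _ => sum_n a N); [| apply filterlim_const].
  exists N. intros n Hn. induction Hn as [|n Hn IH]; [reflexivity |].
  rewrite sum_Sn, <- IH, (Ha (S n)) by lia. symmetry. apply Rplus_0_r.
Qed.

Lemma ex_series_finite_support (a : nat -> R) N :
  (forall n, (N < n)%nat -> a n = 0) -> ex_series a.
Proof. intros Ha. eexists. exact (is_series_finite_support a N Ha). Qed.

Lemma Series_finite_support (a : nat -> R) N :
  (forall n, (N < n)%nat -> a n = 0) -> Series a = sum_n a N.
Proof. intros Ha. apply is_series_unique, is_series_finite_support, Ha. Qed.

Lemma Series_zero (a : nat -> R) : (forall n, a n = 0) -> Series a = 0.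
Proof. intros Ha. rewrite (Series_finite_support a 0) by auto. rewrite sum_O. apply Ha. Qed.

Lemma Series_nonneg (a : nat -> R) : (forall n, 0 <= a n) -> ex_series a -> 0 <= Series a.
Proof.
  intros Ha Hex. rewrite <- (Series_zero (fun _ => 0)) by reflexivity.
  apply Series_le; [intros n; split; [lra | apply Ha] | exact Hex].
Qed.

Lemma Series_single i c : Series (fun n => if Nat.eq_dec n i then c else 0) = c.
Proof.
  rewrite (Series_finite_support _ i) by (intros n Hn; destruct Nat.eq_dec; [lia | reflexivity]).
  destruct i as [|i].
  - rewrite sum_O. reflexivity.
  - rewrite sum_Sn, sum_n_zero by (intros n Hn; destruct Nat.eq_dec; [lia | reflexivity]).
    destruct Nat.eq_dec; [apply Rplus_0_l | lia].
Qed.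

Lemma Series_ge_term (a : nat -> R) i :
  (forall n, 0 <= a n) -> ex_series a -> a i <= Series a.
Proof.
  intros Ha Hex. rewrite <- (Series_single i (a i)) at 1.
  apply Series_le; [| exact Hex].
  intros n. destruct Nat.eq_dec as [->|]; split; [apply Ha | lra | lra | apply Ha].
Qed.

Lemma Series_switch_finite_support (u : nat -> nat -> R) N :
  (forall i j, (N < i)%nat \/ (N < j)%nat -> u i j = 0) ->
  Series (fun i => Series (u i)) = Series (fun j => Series (fun i => u i j)).
Proof.
  intros Hu.
  rewrite (Series_ext _ (fun i => sum_n (u i) N))
    by (intros i; apply Series_finite_support; intros j Hj; apply Hu; right; exact Hj).
  rewrite (Series_ext (fun j => Series _) (fun j => sum_n (fun i => u i j) N))
    by (intros j; apply Series_finite_support; intros i Hi; apply Hu; left; exact Hi).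
  rewrite !(Series_finite_support _ N).
  - apply sum_n_switch.
  - intros j Hj. apply sum_n_zero. intros i _. apply Hu. right. exact Hj.
  - intros i Hi. apply sum_n_zero. intros j _. apply Hu. left. exact Hi.
Qed.

Lemma argmax_upto (w : nat -> R) N :
  exists k, (k <= N)%nat /\ forall n, (n <= N)%nat -> w n <= w k.
Proof.
  induction N as [|N [k [Hk Hmax]]].
  - exists 0%nat. split; [lia |]. intros n Hn. replace n with 0%nat by lia. lra.
  - destruct (Rle_dec (w (S N)) (w k)) as [Hle|Hgt].
    + exists k. split; [lia |]. intros n Hn.
      destruct (Nat.eq_dec n (S N)) as [->|]; [assumption | apply Hmax; lia].
    + exists (S N). split; [lia |]. intros n Hn.
      destruct (Nat.eq_dec n (S N)) as [->|]; [lra |]. specialize (Hmax n ltac:(lia)). lra.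
Qed.

Lemma Rpower_pos x y : 0 < Rpower x y.
Proof. apply exp_pos. Qed.

Lemma sgnpow_pos a e : 0 < a -> sgnpow a e = Rpower a e.
Proof.
  intros Ha. unfold sgnpow, rpow.
  destruct (Rle_dec 0 a); [| lra]. destruct (Req_EM_T a 0); [lra | reflexivity].
Qed.

Lemma sgnpow_zero e : sgnpow 0 e = 0.
Proof. unfold sgnpow, rpow. destruct (Rle_dec 0 0), (Req_EM_T 0 0); lra. Qed.

Lemma sgnpow_nonneg a e : 0 <= a -> 0 <= sgnpow a e.
Proof.
  intros [Ha|<-]; [rewrite sgnpow_pos by exact Ha; left; apply Rpower_pos |].
  rewrite sgnpow_zero. apply Rle_refl.
Qed.

Lemma sgnpow_opp a e : sgnpow (- a) e = - sgnpow a e.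
Proof.
  unfold sgnpow, rpow. rewrite Ropp_involutive.
  destruct (Rle_dec 0 (- a)), (Rle_dec 0 a); try lra.
  assert (a = 0) as -> by lra. rewrite Ropp_0. destruct (Req_EM_T 0 0); lra.
Qed.

Lemma sgnpow_lt_nonneg e a c : 0 < e -> 0 <= a -> a < c -> sgnpow a e < sgnpow c e.
Proof.
  intros He [Ha|<-] Hac.
  - rewrite !sgnpow_pos by lra. apply Rlt_Rpower_l; lra.
  - rewrite sgnpow_zero, sgnpow_pos by exact Hac. apply Rpower_pos.
Qed.

Lemma sgnpow_lt e a c : 0 < e -> a < c -> sgnpow a e < sgnpow c e.
Proof.
  intros He Hac. destruct (Rle_dec 0 a) as [Ha|Ha]; [apply sgnpow_lt_nonneg; lra |].
  destruct (Rle_dec 0 c) as [Hc|Hc].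
  - pose proof (sgnpow_lt_nonneg e 0 (- a) He (Rle_refl 0) ltac:(lra)) as Hneg.
    rewrite sgnpow_zero, sgnpow_opp in Hneg. pose proof (sgnpow_nonneg c e Hc). lra.
  - pose proof (sgnpow_lt_nonneg e (- c) (- a) He ltac:(lra) ltac:(lra)) as Hopp.
    rewrite !sgnpow_opp in Hopp. lra.
Qed.

Lemma sgnpow_le e a c : 0 < e -> a <= c -> sgnpow a e <= sgnpow c e.
Proof. intros He [Hac|<-]; [left; apply sgnpow_lt; assumption | right; reflexivity]. Qed.

Lemma sgnpow_inj e a c : 0 < e -> sgnpow a e = sgnpow c e -> a = c.
Proof.
  intros He Heq. destruct (Rtotal_order a c) as [Hlt|[Hac|Hgt]]; [| exact Hac |].
  - pose proof (sgnpow_lt e a c He Hlt). lra.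
  - pose proof (sgnpow_lt e c a He Hgt). lra.
Qed.

Lemma sgnpow_Rpower_inv p D : 1 < p -> 0 < D ->
  sgnpow (Rpower D (- (1 / (p - 1)))) (p - 1) = / D.
Proof.
  intros Hp HD. rewrite sgnpow_pos, Rpower_mult by apply Rpower_pos.
  replace (- (1 / (p - 1)) * (p - 1)) with (Ropp 1) by (field; lra).
  rewrite Rpower_Ropp, Rpower_1 by exact HD. reflexivity.
Qed.

Lemma Rpower_opp_mult_cancel a D q : 0 < a -> 0 < D ->
  Rpower (a * D) (- q) * Rpower a q = Rpower D (- q).
Proof.
  intros Ha HD. rewrite <- Rpower_mult_distr, !Rpower_Ropp by assumption.
  field. split; apply Rgt_not_eq, Rpower_pos.
Qed.

Section Distance.

Variable b : nat -> nat -> R.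
Hypothesis b_sym : forall x y, b x y = b y x.
Hypothesis b_connected : connected b.
Hypothesis b_locally_finite : locally_finite b.

Lemma walk_snoc x y z n : walk b x y n -> 0 < b y z -> walk b x z (S n).
Proof.
  induction 1; intros Hyz.
  - apply walk_cons with z; [exact Hyz | apply walk_nil].
  - apply walk_cons with y; auto.
Qed.

Lemma walk_last n : forall x z, walk b x z (S n) -> exists y, walk b x y n /\ 0 < b y z.
Proof.
  induction n as [|n IH]; intros x z Hw; inversion Hw as [|? y ? ? Hxy Hyz]; subst.
  - inversion Hyz; subst. exists x. split; [constructor | exact Hxy].
  - destruct (IH _ _ Hyz) as [w [Hyw Hwz]].
    exists w. split; [apply walk_cons with y |]; assumption.
Qed.

Lemma gdist_spec x0 x : is_dist b x0 x (gdist b x0 x).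
Proof.
  unfold gdist. apply epsilon_spec.
  destruct (dec_inh_nat_subset_has_unique_least_element (walk b x0 x))
    as [n [[Hn Hmin] _]]; [intros; apply classic | apply b_connected |].
  exists n. split; [exact Hn |]. intros k Hk Hw. specialize (Hmin k Hw). lia.
Qed.

Lemma gdist_walk x0 x : walk b x0 x (gdist b x0 x).
Proof. apply gdist_spec. Qed.

Lemma gdist_le_walk x0 x n : walk b x0 x n -> (gdist b x0 x <= n)%nat.
Proof.
  intros Hw. destruct (le_lt_dec (gdist b x0 x) n) as [|Hlt]; [assumption |].
  exfalso. exact (proj2 (gdist_spec x0 x) n Hlt Hw).
Qed.

Lemma gdist_edge x0 x y : 0 < b x y -> (gdist b x0 y <= S (gdist b x0 x))%nat.
Proof. intros Hxy. apply gdist_le_walk, walk_snoc with x; [apply gdist_walk | exact Hxy]. Qed.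

Lemma gdist_neighbour x0 x y : 0 < b x y ->
  (gdist b x0 y <= S (gdist b x0 x))%nat /\ (gdist b x0 x <= S (gdist b x0 y))%nat.
Proof. intros Hxy. split; apply gdist_edge; [| rewrite b_sym]; exact Hxy. Qed.

Lemma gdist_pred x0 x n : gdist b x0 x = S n -> exists y, 0 < b y x /\ gdist b x0 y = n.
Proof.
  intros Hx. pose proof (gdist_walk x0 x) as Hw. rewrite Hx in Hw.
  destruct (walk_last _ _ _ Hw) as [y [Hy Hyx]]. exists y. split; [exact Hyx |].
  pose proof (gdist_le_walk _ _ _ Hy). pose proof (gdist_edge x0 y x Hyx). lia.
Qed.

Lemma gdist_self x0 : gdist b x0 x0 = 0%nat.
Proof. pose proof (gdist_le_walk x0 x0 0 (walk_nil b x0)). lia. Qed.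

Lemma gdist_eq_0 x0 x : gdist b x0 x = 0%nat -> x = x0.
Proof.
  intros Hx. pose proof (gdist_walk x0 x) as Hw. rewrite Hx in Hw.
  inversion Hw; reflexivity.
Qed.

Lemma neighbours_bounded x : exists N, forall y, 0 < b x y -> (y <= N)%nat.
Proof.
  destruct (b_locally_finite x) as [l Hl]. exists (list_max l). intros y Hy.
  assert (Hmax : List.Forall (fun k => (k <= list_max l)%nat) l) by (apply list_max_le; lia).
  rewrite List.Forall_forall in Hmax. exact (Hmax y (Hl y Hy)).
Qed.

Lemma neighbours_of_initial_segment_bounded N : exists B, forall x y,
  (x <= N)%nat -> 0 < b x y -> (y <= B)%nat.
Proof.
  induction N as [|N [B HB]].
  - destruct (neighbours_bounded 0) as [B HB]. exists B. intros x y Hx.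
    replace x with 0%nat by lia. apply HB.
  - destruct (neighbours_bounded (S N)) as [B' HB']. exists (Nat.max B B'). intros x y Hx Hxy.
    destruct (Nat.eq_dec x (S N)) as [->|Hne].
    + specialize (HB' y Hxy). lia.
    + assert (Hx' : (x <= N)%nat) by lia. specialize (HB x y Hx' Hxy). lia.
Qed.

(* Vertices are numbered by nat, so finiteness of the ball B(R) reads: every vertex with a
   large enough index lies outside it. *)
Lemma ball_finite x0 R : exists N, forall x, (N < x)%nat -> (R < gdist b x0 x)%nat.
Proof.
  induction R as [|R [N HN]].
  - exists x0. intros x Hx.
    destruct (gdist b x0 x) eqn:Hd; [apply gdist_eq_0 in Hd; lia | lia].
  - destruct (neighbours_of_initial_segment_bounded N) as [B HB].
    exists (Nat.max N B). intros x Hx.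
    assert (HxR : (R < gdist b x0 x)%nat) by (apply HN; lia).
    destruct (Nat.eq_dec (gdist b x0 x) (S R)) as [HSR|]; [| lia].
    destruct (gdist_pred x0 x R HSR) as [y [Hyx Hy]].
    assert (Hy' : (y <= N)%nat).
    { destruct (le_lt_dec y N) as [|Hlt]; [assumption |]. specialize (HN y Hlt). lia. }
    specialize (HB y x Hy' Hyx). lia.
Qed.

Lemma sphere_inhabited x0 r : exists x, gdist b x0 x = r.
Proof.
  assert (Hdown : forall k x, gdist b x0 x = (r + k)%nat -> exists y, gdist b x0 y = r).
  { induction k as [|k IH]; intros x Hx.
    - exists x. lia.
    - rewrite Nat.add_succ_r in Hx. destruct (gdist_pred x0 x _ Hx) as [y [_ Hy]]. eauto. }
  destruct (ball_finite x0 r) as [N HN]. specialize (HN (S N) (Nat.lt_succ_diag_r N)).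
  apply (Hdown (gdist b x0 (S N) - r)%nat (S N)). lia.
Qed.

Lemma radial_vanishes_at_infinity x0 (h : nat -> R) :
  (forall eps, 0 < eps -> exists R, forall r, (R <= r)%nat -> h r < eps) ->
  forall eps, 0 < eps -> exists N, forall x, (N <= x)%nat -> h (gdist b x0 x) < eps.
Proof.
  intros Hh eps Heps. destruct (Hh eps Heps) as [R HR].
  destruct (ball_finite x0 R) as [N HN]. exists (S N). intros x Hx.
  apply HR. specialize (HN x Hx). lia.
Qed.

End Distance.

Section Laplacian.

Variables (p : R) (b : nat -> nat -> R) (m : nat -> R).
Hypothesis p_gt_1 : 1 < p.
Hypothesis b_sym : forall x y, b x y = b y x.
Hypothesis b_nonneg : forall x y, 0 <= b x y.
Hypothesis m_pos : forall x, 0 < m x.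
Hypothesis b_connected : connected b.
Hypothesis b_locally_finite : locally_finite b.

Lemma ex_series_neighbourhood x (a : nat -> R) :
  (forall y, b x y = 0 -> a y = 0) -> ex_series a.
Proof.
  intros Ha. destruct (neighbours_bounded b b_locally_finite x) as [N HN].
  apply (ex_series_finite_support a N). intros y Hy. apply Ha.
  destruct (b_nonneg x y) as [Hxy|Hxy]; [specialize (HN y Hxy); lia | auto].
Qed.

Lemma plap_eq_at_max f g x :
  plap p b m f x = plap p b m g x -> (forall y, f y - g y <= f x - g x) ->
  forall y, 0 < b x y -> f y - g y = f x - g x.
Proof.
  intros Heq Hmax y Hxy.
  set (a := fun z => b x z * sgnpow (f x - f z) (p - 1) - b x z * sgnpow (g x - g z) (p - 1)).
  assert (Ha : forall z, 0 <= a z).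
  { intros z. unfold a. rewrite <- Rmult_minus_distr_l. apply Rmult_le_pos; [apply b_nonneg |].
    assert (sgnpow (g x - g z) (p - 1) <= sgnpow (f x - f z) (p - 1))
      by (apply sgnpow_le; [lra | specialize (Hmax z); lra]).
    lra. }
  assert (Hex : ex_series a)
    by (apply (ex_series_neighbourhood x); intros z Hz; unfold a; rewrite Hz; ring).
  assert (Hsum : Series a = 0).
  { unfold plap in Heq. specialize (m_pos x).
    apply Rmult_eq_reg_l in Heq; [| apply Rinv_neq_0_compat; lra].
    unfold a. rewrite Series_minus; [lra | |];
      apply (ex_series_neighbourhood x); intros z Hz; rewrite Hz; ring. }
  assert (Hy : a y = 0) by (pose proof (Series_ge_term a y Ha Hex); pose proof (Ha y); lra).
  unfold a in Hy. rewrite <- Rmult_minus_distr_l in Hy.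
  apply Rmult_integral in Hy as [Hy|Hy]; [lra |].
  apply Rminus_diag_uniq, sgnpow_inj in Hy; lra.
Qed.

Lemma max_along_walk f g M :
  (forall x, plap p b m f x = plap p b m g x) -> (forall y, f y - g y <= M) ->
  forall x z n, walk b x z n -> f x - g x = M -> f z - g z = M.
Proof.
  intros Heq Hmax. induction 1 as [x|x y z n Hxy Hw IH]; intros Hx; [exact Hx |].
  apply IH. rewrite <- Hx.
  apply (plap_eq_at_max f g x (Heq x)); [rewrite Hx; exact Hmax | exact Hxy].
Qed.

Lemma comparison_vanishing f g :
  (forall x, plap p b m f x = plap p b m g x) -> (forall x, 0 < g x) ->
  (forall eps, 0 < eps -> exists N, forall x, (N <= x)%nat -> f x < eps) ->
  forall x, f x <= g x.
Proof.
  intros Heq Hg Hf x1. apply Rnot_lt_le. intros Hlt.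
  set (w := fun x => f x - g x).
  destruct (Hf (w x1) ltac:(cbv [w]; lra)) as [N HN].
  assert (Hfar : forall x, (N <= x)%nat -> w x < w x1)
    by (intros x Hx; specialize (HN x Hx); specialize (Hg x); cbv [w] in *; lra).
  destruct (argmax_upto w (Nat.max N x1)) as [k [Hk Hmax]].
  assert (Hglobal : forall x, w x <= w k).
  { intros x. destruct (le_lt_dec x (Nat.max N x1)) as [Hx|Hx]; [apply Hmax, Hx |].
    specialize (Hfar x ltac:(lia)). specialize (Hmax x1 ltac:(lia)). lra. }
  destruct (b_connected k N) as [n Hw].
  pose proof (max_along_walk f g (w k) Heq Hglobal k N n Hw eq_refl) as HwN.
  specialize (Hfar N (le_n N)). specialize (Hmax x1 ltac:(lia)). cbv [w] in *. lra.
Qed.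

Lemma plap_radial x0 (h : nat -> R) x :
  plap p b m (fun y => h (gdist b x0 y)) x =
  kplus b m x0 x * sgnpow (h (gdist b x0 x) - h (S (gdist b x0 x))) (p - 1)
  + kminus b m x0 x * sgnpow (h (gdist b x0 x) - h (gdist b x0 x - 1)%nat) (p - 1).
Proof.
  unfold plap. set (r := gdist b x0 x). set (up := sgnpow (h r - h (S r)) (p - 1)).
  set (down := sgnpow (h r - h (r - 1)%nat) (p - 1)).
  set (b_out := fun y => if Nat.eq_dec (gdist b x0 y) (S r) then b x y else 0).
  set (b_in := fun y => if Nat.eq_dec (S (gdist b x0 y)) r then b x y else 0).
  rewrite (Series_ext _ (fun y => up * b_out y + down * b_in y)).
  - rewrite Series_plus, !Series_scal_l.
    + unfold kplus, kminus. fold r. fold b_out b_in. ring.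
    + apply (ex_series_neighbourhood x). intros y Hy. unfold b_out. rewrite Hy.
      destruct Nat.eq_dec; ring.
    + apply (ex_series_neighbourhood x). intros y Hy. unfold b_in. rewrite Hy.
      destruct Nat.eq_dec; ring.
  - intros y. unfold b_out, b_in.
    destruct (b_nonneg x y) as [Hxy|Hxy];
      [| rewrite <- Hxy; destruct Nat.eq_dec, Nat.eq_dec; ring].
    pose proof (gdist_neighbour b b_sym b_connected x0 x y Hxy) as Hd. fold r in Hd.
    destruct (Nat.eq_dec (gdist b x0 y) (S r)) as [Hup|Hup],
      (Nat.eq_dec (S (gdist b x0 y)) r) as [Hdown|Hdown]; try lia.
    + rewrite Hup. unfold up. ring.
    + unfold down. replace (r - 1)%nat with (gdist b x0 y) by lia. ring.
    + replace (gdist b x0 y) with r by lia. rewrite Rminus_diag, sgnpow_zero. ring.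
Qed.

End Laplacian.

Definition sphere_mass (b : nat -> nat -> R) (m : nat -> R) (x0 r : nat) : R :=
  Series (fun x => if Nat.eq_dec (gdist b x0 x) r then m x else 0).

Section ModelGraph.

Variables (b : nat -> nat -> R) (m : nat -> R) (x0 : nat).
Hypothesis b_sym : forall x y, b x y = b y x.
Hypothesis b_nonneg : forall x y, 0 <= b x y.
Hypothesis m_pos : forall x, 0 < m x.
Hypothesis b_connected : connected b.
Hypothesis b_locally_finite : locally_finite b.
Hypothesis b_model : model_graph b m (fun _ => 0) x0.

Local Notation d := (gdist b x0).

Lemma dB_kplus r x : d x = r -> dB b x0 r = kplus b m x0 x * sphere_mass b m x0 r.
Proof.
  intros Hx. unfold dB, sphere_mass. rewrite <- Series_scal_l. apply Series_ext. intros z.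
  destruct (Nat.eq_dec (d z) r) as [Hz|]; [| ring].
  destruct (b_model x z ltac:(lia)) as [Hk _]. rewrite Hk. unfold kplus. rewrite Hz.
  specialize (m_pos z). field. lra.
Qed.

Lemma dB_kminus r x : d x = S r -> dB b x0 r = kminus b m x0 x * sphere_mass b m x0 (S r).
Proof.
  intros Hx. destruct (ball_finite b b_connected b_locally_finite x0 (S r)) as [N HN].
  unfold dB, sphere_mass. rewrite <- Series_scal_l.
  rewrite (Series_ext _ (fun z => Series (fun y =>
    if Nat.eq_dec (d z) r then if Nat.eq_dec (d y) (S r) then b z y else 0 else 0))).
  2:{ intros z. destruct Nat.eq_dec; [reflexivity |]. symmetry. apply Series_zero. reflexivity. }
  rewrite (Series_switch_finite_support _ N).
  2:{ intros z y Hzy.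
      destruct (Nat.eq_dec (d z) r), (Nat.eq_dec (d y) (S r)); try reflexivity.
      destruct Hzy as [Hz|Hy]; [specialize (HN z Hz) | specialize (HN y Hy)]; lia. }
  apply Series_ext. intros y. destruct (Nat.eq_dec (d y) (S r)) as [Hy|Hy].
  - destruct (b_model x y ltac:(lia)) as [_ [Hk _]]. rewrite Hk. unfold kminus. rewrite Hy.
    transitivity (Series (fun z => if Nat.eq_dec (S (d z)) (S r) then b y z else 0)).
    + apply Series_ext. intros z. rewrite b_sym.
      destruct Nat.eq_dec, Nat.eq_dec; lia || reflexivity.
    + specialize (m_pos y). field. lra.
  - rewrite Rmult_0_r. apply Series_zero. intros z. destruct Nat.eq_dec; reflexivity.
Qed.

Lemma dB_pos r : 0 < dB b x0 r.
Proof.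
  destruct (ball_finite b b_connected b_locally_finite x0 (S r)) as [N HN].
  destruct (sphere_inhabited b b_connected b_locally_finite x0 (S r)) as [y Hy].
  destruct (gdist_pred b b_connected x0 y r Hy) as [z [Hzy Hz]].
  set (edge_up := fun z y => if Nat.eq_dec (d y) (S r) then b z y else 0).
  set (outer := fun z => if Nat.eq_dec (d z) r then Series (edge_up z) else 0).
  assert (Hup_nonneg : forall z y, 0 <= edge_up z y)
    by (intros; unfold edge_up; destruct Nat.eq_dec; [apply b_nonneg | lra]).
  assert (Hup_ex : forall z, ex_series (edge_up z)).
  { intros z'. apply (ex_series_finite_support _ N). intros y' Hy'. specialize (HN y' Hy').
    unfold edge_up. destruct Nat.eq_dec; [lia | reflexivity]. }
  assert (Hz_up : 0 < Series (edge_up z)).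
  { apply Rlt_le_trans with (edge_up z y); [| apply Series_ge_term; auto].
    unfold edge_up. destruct Nat.eq_dec; [exact Hzy | lia]. }
  change (dB b x0 r) with (Series outer).
  apply Rlt_le_trans with (outer z); [unfold outer; destruct Nat.eq_dec; [exact Hz_up | lia] |].
  apply Series_ge_term.
  - intros z'. unfold outer. destruct Nat.eq_dec; [apply Series_nonneg; auto | lra].
  - apply (ex_series_finite_support _ N). intros z' Hz'. specialize (HN z' Hz').
    unfold outer. destruct Nat.eq_dec; [lia | reflexivity].
Qed.

Lemma sphere_mass_pole : sphere_mass b m x0 0 = m x0.
Proof.
  unfold sphere_mass. rewrite <- (Series_single x0 (m x0)). apply Series_ext. intros x.
  destruct (Nat.eq_dec x x0) as [->|Hx].
  - rewrite gdist_self by exact b_connected. reflexivity.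
  - destruct Nat.eq_dec as [Hd|]; [| reflexivity].
    apply gdist_eq_0 in Hd; [contradiction | exact b_connected].
Qed.

Lemma kminus_pole : kminus b m x0 x0 = 0.
Proof.
  unfold kminus. rewrite Series_zero; [ring |]. intros y.
  rewrite gdist_self by exact b_connected. destruct Nat.eq_dec; [lia | reflexivity].
Qed.

Lemma dB_succ r x : d x = S r -> dB b x0 (S r) = kplus b m x0 x / kminus b m x0 x * dB b x0 r.
Proof.
  intros Hx. pose proof (dB_pos r) as Hpos.
  rewrite (dB_kminus r x Hx) in *. rewrite (dB_kplus (S r) x Hx).
  assert (kminus b m x0 x <> 0) by (intros Hk; rewrite Hk in Hpos; lra).
  field. assumption.
Qed.

Lemma radial_green p (h : nat -> R) : 1 < p ->
  (forall r, h r - h (S r) = Rpower (dB b x0 r) (- (1 / (p - 1)))) ->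
  green_eq p b m x0 (fun x => h (d x)).
Proof.
  intros Hp Hh x. rewrite (plap_radial p b m b_sym b_nonneg b_connected b_locally_finite).
  rewrite Hh, sgnpow_Rpower_inv by (apply Hp || apply dB_pos).
  destruct (Nat.eqb_spec x x0) as [->|Hx].
  - rewrite (gdist_self b b_connected), kminus_pole. pose proof (dB_pos 0) as Hpos.
    rewrite (dB_kplus 0 x0 (gdist_self b b_connected x0)), sphere_mass_pole in *.
    specialize (m_pos x0).
    assert (kplus b m x0 x0 <> 0) by (intros Hk; rewrite Hk in Hpos; lra).
    field. split; lra.
  - destruct (d x) as [|r] eqn:Hr;
      [apply gdist_eq_0 in Hr; [contradiction | exact b_connected] |].
    replace (h (S r) - h (S r - 1)%nat) with (- (h r - h (S r)))
      by (rewrite Nat.sub_1_r; simpl; ring).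
    rewrite Hh, sgnpow_opp, sgnpow_Rpower_inv by (apply Hp || apply dB_pos).
    pose proof (dB_pos r) as Hpos0. pose proof (dB_pos (S r)) as Hpos1.
    rewrite (dB_kminus r x Hr) in *. rewrite (dB_kplus (S r) x Hr) in *.
    assert (kplus b m x0 x <> 0) by (intros Hk; rewrite Hk in Hpos1; lra).
    assert (kminus b m x0 x <> 0) by (intros Hk; rewrite Hk in Hpos0; lra).
    assert (sphere_mass b m x0 (S r) <> 0) by (intros Hs; rewrite Hs in Hpos0; lra).
    field. tauto.
Qed.

Lemma dB_geometric kappa r0 :
  (forall x, (r0 < d x)%nat -> kplus b m x0 x / kminus b m x0 x = kappa) ->
  forall r, (r0 <= r)%nat -> dB b x0 (S r) = kappa * dB b x0 r.
Proof.
  intros Hratio r Hr.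
  destruct (sphere_inhabited b b_connected b_locally_finite x0 (S r)) as [x Hx].
  rewrite (dB_succ r x Hx), Hratio by lia. reflexivity.
Qed.

Lemma green_radial p (h : nat -> R) g : 1 < p ->
  (forall r, 0 < h r) ->
  (forall r, h r - h (S r) = Rpower (dB b x0 r) (- (1 / (p - 1)))) ->
  (forall eps, 0 < eps -> exists R, forall r, (R <= r)%nat -> h r < eps) ->
  is_green p b m x0 g -> forall x, g x = h (d x).
Proof.
  intros Hp Hpos Hstep Hvanish [g_pos [g_green g_min]] x.
  pose proof (radial_green p h Hp Hstep) as h_green.
  apply Rle_antisym.
  - apply (g_min (fun y => h (d y))); [intros y; apply Hpos | exact h_green].
  - apply (comparison_vanishing p b m) with (f := fun y => h (d y)) (g := g); auto.
    + intros y. rewrite h_green, g_green. reflexivity.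
    + apply (radial_vanishes_at_infinity b b_connected b_locally_finite x0 h Hvanish).
Qed.

End ModelGraph.

Definition tail_sum (a : nat -> R) (r : nat) : R := Series (fun k => a (r + k)%nat).

Section GeometricTail.

Variables (E : nat -> R) (K : R) (r0 : nat).
Hypothesis K_gt_1 : 1 < K.
Hypothesis E_pos : forall r, 0 < E r.
Hypothesis E_geometric : forall r, (r0 <= r)%nat -> E (S r) * K = E r.

Lemma E_shift r k : (r0 <= r)%nat -> E (r + k)%nat = E r * (/ K) ^ k.
Proof.
  intros Hr. induction k as [|k IH]; [rewrite Nat.add_0_r; ring |].
  rewrite Nat.add_succ_r. apply (Rmult_eq_reg_r K); [| lra].
  rewrite E_geometric, IH by lia. simpl. field. lra.
Qed.

Lemma Rabs_inv_K_lt_1 : Rabs (/ K) < 1.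
Proof.
  rewrite Rabs_right by (left; apply Rinv_0_lt_compat; lra).
  rewrite <- Rinv_1. apply Rinv_1_lt_contravar; lra.
Qed.

Lemma ex_series_tail r : ex_series (fun k => E (r + k)%nat).
Proof.
  assert (Hgeo : forall r, (r0 <= r)%nat -> ex_series (fun k => E (r + k)%nat)).
  { intros r' Hr'. apply (ex_series_ext (fun k => E r' * (/ K) ^ k)).
    - intros k. symmetry. apply E_shift, Hr'.
    - apply (ex_series_scal_l (V := R_NormedModule)), ex_series_geom, Rabs_inv_K_lt_1. }
  apply (ex_series_incr_n _ r0). apply (ex_series_ext (fun k => E (r + r0 + k)%nat)).
  - intros k. f_equal. lia.
  - apply Hgeo. lia.
Qed.

Lemma tail_sum_step r : tail_sum E r = E r + tail_sum E (S r).
Proof.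
  unfold tail_sum. rewrite Series_incr_1 by apply ex_series_tail.
  rewrite Nat.add_0_r. f_equal. apply Series_ext. intros k. f_equal. lia.
Qed.

Lemma tail_sum_pos r : 0 < tail_sum E r.
Proof.
  apply Rlt_le_trans with (E (r + 0)%nat); [apply E_pos |].
  apply (Series_ge_term (fun k => E (r + k)%nat));
    [intros; left; apply E_pos | apply ex_series_tail].
Qed.

Lemma tail_sum_geometric r : (r0 <= r)%nat -> tail_sum E (S r) = E r / (K - 1).
Proof.
  intros Hr. unfold tail_sum.
  rewrite (Series_ext _ (fun k => E r / K * (/ K) ^ k)).
  - rewrite Series_scal_l, Series_geom by apply Rabs_inv_K_lt_1. field. split; lra.
  - intros k. replace (S r + k)%nat with (r + S k)%nat by lia. rewrite E_shift by exact Hr.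
    simpl. unfold Rdiv. ring.
Qed.

Lemma tail_sum_vanishes eps : 0 < eps -> exists R, forall r, (R <= r)%nat -> tail_sum E r < eps.
Proof.
  intros Heps.
  assert (HE0 : is_lim_seq E 0).
  { apply ex_series_lim_0, (ex_series_ext (fun k => E (0 + k)%nat));
      [reflexivity | apply ex_series_tail]. }
  apply is_lim_seq_spec in HE0.
  destruct (HE0 (mkposreal (eps * (K - 1)) ltac:(apply Rmult_lt_0_compat; lra))) as [R HR].
  exists (S (Nat.max R r0)). intros r Hr.
  destruct r as [|r]; [lia |]. rewrite tail_sum_geometric by lia.
  specialize (HR r ltac:(lia)). simpl in HR. rewrite Rminus_0_r, Rabs_right in HR
    by (left; apply E_pos).
  apply Rmult_lt_reg_r with (K - 1); [lra |]. unfold Rdiv. rewrite Rmult_assoc, Rinv_l; lra.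
Qed.

End GeometricTail.

Theorem proposition4p9 (p : R) (b : nat -> nat -> R) (m : nat -> R) (x0 : nat)
  (r0 : nat) (kappa : R) (g : nat -> R) :
  1 < p ->
  weighted_graph b m (fun _ => 0) ->
  model_graph b m (fun _ => 0) x0 ->
  p_hyperbolic p b (fun _ => 0) ->
  1 < kappa ->
  (forall x, (r0 < gdist b x0 x)%nat -> kplus b m x0 x / kminus b m x0 x = kappa) ->
  is_green p b m x0 g ->
  (forall x y, gdist b x0 x = gdist b x0 y -> g x = g y) /\
  (forall x, (r0 < gdist b x0 x)%nat ->
     g x = 1 / ((Rpower kappa (1 / (p - 1)) - 1)
                * Rpower (dB b x0 (gdist b x0 x - 1)) (1 / (p - 1)))).
Proof.
  intros Hp Hgraph Hmodel _ Hkappa Hratio Hgreen.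
  destruct Hgraph as [b_sym [b_nonneg [_ [_ [m_pos [_ [b_conn b_lf]]]]]]].
  set (q := 1 / (p - 1)).
  set (E := fun r => Rpower (dB b x0 r) (- q)).
  set (K := Rpower kappa q).
  assert (HK : 1 < K).
  { unfold K. rewrite <- (Rpower_O kappa) by lra.
    apply Rpower_lt; [lra | apply Rdiv_lt_0_compat; lra]. }
  assert (E_pos : forall r, 0 < E r) by (intros; apply Rpower_pos).
  assert (E_geometric : forall r, (r0 <= r)%nat -> E (S r) * K = E r).
  { intros r Hr. unfold E, K.
    rewrite (dB_geometric b m x0) with (kappa := kappa) (r0 := r0) by auto.
    apply Rpower_opp_mult_cancel; [lra | apply dB_pos; assumption]. }
  assert (Hg : forall x, g x = tail_sum E (gdist b x0 x)).
  { apply (green_radial b m x0) with p; auto.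
    - intros r. apply (tail_sum_pos E K r0); assumption.
    - intros r. rewrite (tail_sum_step E K r0) by assumption. unfold E, q. ring.
    - intros eps Heps. apply (tail_sum_vanishes E K r0); assumption. }
  split.
  - intros x y Hxy. rewrite !Hg, Hxy. reflexivity.
  - intros x Hx. rewrite Hg. replace (gdist b x0 x) with (S (gdist b x0 x - 1)) at 1 by lia.
    rewrite (tail_sum_geometric E K r0) by (assumption || lia).
    unfold E. rewrite Rpower_Ropp. field. split; [apply Rgt_not_eq, Rpower_pos | lra].
Qed.
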